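(* Let $(Q,\lambda)$ be an $\mathcal{R}$-characteristic pair on an admissible $n$-dimensional simple polytope $Q$ with $\ell$ vertices. Assume that for every term $B_i$ with $\dim B_i>1$ occurring in any retraction sequence of $Q$, $$\gcd\{g_{B_i}(v)\mid v\text{ a free vertex of }B_i\}=1.$$ Then for every prime $p$ there exists a retraction sequence $\{(B_i,E_i,b_i)\}_{i=1}^{\ell}$ of $Q$ with $\gcd\{p,g_{E_i}(b_i)\}=1$ for all $i=1,\dots,\ell$ (so $X(Q,\lambda)$ satisfies the hypothesis of Theorem 1.2 via the induced building sequence).
   Context: $Q$ is an $n$-dimensional simple convex polytope with facets $F_1,\dots,F_m$; $\lambda:\{F_1,\dots,F_m\}\to\mathbb{Z}^n$ is an $\mathcal{R}$-characteristic function, i.e. $\{\lambda(F_{i_1}),\dots,\lambda(F_{i_k})\}$ is linearly independent whenever $F_{i_1}\cap\cdots\cap F_{i_k}\ne\emptyset$. For a codimension-$k$ face $E=F_{i_1}\cap\cdots\cap F_{i_k}$, let $\rho_E:\mathbb{Z}^n\to\mathbb{Z}^n/\big((\mathrm{span}_{\mathbb{Z}}\{\lambda(F_{i_1}),\dots,\lambda(F_{i_k})\}\otimes\mathbb{R})\cap\mathbb{Z}^n\big)\cong\mathbb{Z}^{n-k}$, and for each facet $E\cap F_j\ne\emptyset$ ($j\notin\{i_1,\dots,i_k\}$) of $E$ let $\lambda_E(E\cap F_j)$ be the primitive vector in the direction of $\rho_E(\lambda(F_j))$. For a vertex $v=\bigcap_{s=1}^{n-k}(E\cap F_{j_s})$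 of $E$, $g_E(v)=|\det[\lambda_E(E\cap F_{j_1})^t,\dots,\lambda_E(E\cap F_{j_{n-k}})^t]|$ ($=1$ if $E=\{v\}$). A retraction sequence for $Q$ is a sequence of triples $(B_k,E_k,b_k)$, $k=1,\dots,\ell$: $B_1=E_1=Q$ and $b_1$ a vertex of $Q$; $B_k$ is the union of all faces of $B_{k-1}$ not containing $b_{k-1}$; $b_k$ is a free vertex of $B_k$, i.e. a vertex with a neighbourhood in $B_k$ homeomorphic as a manifold with corners to $\mathbb{R}^d_{\ge0}$ for some $d$, and $E_k$ is the unique $d$-dimensional face of $B_k$ containing $b_k$; the sequence ends with $B_\ell=E_\ell=\{b_\ell\}$. For a free vertex $v$ of such a $B_i$ with associated $d$-dimensional face $E$, write $g_{B_i}(v):=g_E(v)$. $Q$ is admissible if every complex $B_k$ obtained in this way (for any choices of free vertices) has at least one free vertex. *)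

From HB Require Import structures.
From mathcomp Require Import all_boot all_order all_algebra.
From Stdlib Require Import ClassicalEpsilon.
Set Implicit Arguments. Unset Strict Implicit. Unset Printing Implicit Defensive.
Import Order.TTheory GRing.Theory Num.Theory.

Section Geometry.
Local Open Scope ring_scope.
Variables (R : realFieldType) (n m : nat) (A : 'M[R]_(m, n)) (b : 'cV[R]_m).

Definition inQ (x : 'cV[R]_n) : Prop := forall i : 'I_m, (A *m x) i 0 <= b i 0.
Definition onF (i : 'I_m) (x : 'cV[R]_n) : Prop := inQ x /\ (A *m x) i 0 = b i 0.

Definition bounded_Q : Prop :=
  exists M : R, forall x, inQ x -> forall j : 'I_n, `|x j 0| <= M.
Definition fulldim_Q : Prop :=
  exists x : 'cV[R]_n, forall i : 'I_m, (A *m x) i 0 < b i 0.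
(* each F_i is a genuine facet (irredundant inequality, distinct facets) *)
Definition facets_Q : Prop :=
  forall i : 'I_m, exists x, onF i x /\
    forall j : 'I_m, j != i -> (A *m x) j 0 < b j 0.

Definition vertex_pt (x : 'cV[R]_n) : Prop :=
  inQ x /\ forall (y z : 'cV[R]_n) (t : R), inQ y -> inQ z -> 0 < t < 1 ->
     x = t *: y + (1 - t) *: z -> y = z.

Definition simple_Q : Prop :=
  forall x, vertex_pt x -> #|[set i : 'I_m | (A *m x) i 0 == b i 0]| = n.

Definition simple_polytope : Prop :=
  [/\ bounded_Q, fulldim_Q, facets_Q & simple_Q].

Definition meets (S : {set 'I_m}) : Prop :=
  exists x, inQ x /\ forall i, i \in S -> (A *m x) i 0 = b i 0.
End Geometry.

(* Faces of a simple polytope are encoded by the set S of facets containing  *)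
(* them: the face E_S = \bigcap_{i in S} F_i (E_set0 = Q), of codimension    *)
(* #|S|.  K is the family of such S (the faces of Q).  A vertex v is an S in *)
(* K with #|S| = n; v lies in the face E_S iff S \subset v; the face E_T is  *)
(* contained in E_S iff S \subset T.                                         *)
Section Combinatorics.
Variables (n m : nat) (K : {set {set 'I_m}}).

Definition isvert (v : {set 'I_m}) : bool := (v \in K) && (#|v| == n).
Definition nverts : nat := #|[set v | isvert v]|.

(* v is a free vertex of the complex B (a set of faces) and E is the unique
   maximal face of B containing v (E_k in the paper) *)
Definition free_with (B : {set {set 'I_m}}) (v E : {set 'I_m}) : bool :=
  [&& isvert v, v \in B, E \in B, E \subset v &
      [forall S in B, (S \subset v) ==> (E \subset S)]].
Definition is_free (B : {set {set 'I_m}}) (v : {set 'I_m}) : bool :=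
  [exists E, free_with B v E].
Definition Eof (B : {set {set 'I_m}}) (v : {set 'I_m}) : {set 'I_m} :=
  odflt set0 [pick E | free_with B v E].

Definition next (B : {set {set 'I_m}}) (v : {set 'I_m}) : {set {set 'I_m}} :=
  [set S in B | ~~ (S \subset v)].

Definition dimB (B : {set {set 'I_m}}) : nat := \max_(S in B) (n - #|S|).

Inductive reachable : {set {set 'I_m}} -> Prop :=
| reach0 : reachable K
| reachS B v : reachable B -> is_free B v -> B != [set v] -> reachable (next B v).

Definition admissible : Prop :=
  forall B, reachable B -> exists v, is_free B v.

Fixpoint retr_tail (B : {set {set 'I_m}})
    (s : seq ({set {set 'I_m}} * {set 'I_m} * {set 'I_m})) : Prop :=
  match s with
  | [::] => False
  | (B', E, v) :: s' =>
      B' = B /\ free_with B v E /\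
      match s' with
      | [::] => B = [set v] /\ E = v
      | _ => retr_tail (next B v) s'
      end
  end.
Definition retraction_seq s : Prop := retr_tail K s.
End Combinatorics.

Section Characteristic.
Local Open Scope ring_scope.
Variables (R : realFieldType) (n m : nat) (lam : 'I_m -> 'rV[int]_n).

Definition R_characteristic (K : {set {set 'I_m}}) : Prop :=
  forall S, S \in K -> forall c : 'I_m -> int,
    (forall i, i \notin S -> c i = 0) -> \sum_i c i *: lam i = 0 ->
    forall i, c i = 0.

Definition in_Rspan (S : {set 'I_m}) (x : 'rV[int]_n) : Prop :=
  exists c : 'I_m -> R, (forall i, i \notin S -> c i = 0) /\
    map_mx (fun z : int => z%:~R) x =
      \sum_i c i *: map_mx (fun z : int => z%:~R : R) (lam i).

Definition primitive k (w : 'rV[int]_k) : Prop :=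
  forall d : int, (forall j, (d %| w ord0 j)%Z) -> `|d|%N = 1%N.

(* gE_rel E v g : P realises rho_E : Z^n -> Z^n / (saturated span) = Z^(n-k),
   f enumerates the facets E /\ F_j through v, the rows of W are
   lambda_E(E /\ F_{f s}), and g = |det W|. *)
Definition gE_rel (E v : {set 'I_m}) (g : nat) : Prop :=
  exists (P : 'M[int]_(n, n - #|E|)) (f : 'I_(n - #|E|) -> 'I_m)
         (W : 'M[int]_(n - #|E|)),
    [/\ forall y : 'rV[int]_(n - #|E|), exists x : 'rV[int]_n, x *m P = y,
        forall x : 'rV[int]_n, x *m P = 0 <-> in_Rspan E x,
        injective f /\ (forall s, f s \in v :\: E) /\
          (forall i, i \in v :\: E -> exists s, f s = i),
        forall s, primitive (row s W) /\
          exists c : nat, (0 < c)%N /\ lam (f s) *m P = c%:Z *: row s W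
      & g = `|\det W|%N].

(* g_E(v), well defined (independent of choices); 0 if undefined *)
Definition gE (E v : {set 'I_m}) : nat :=
  epsilon (inhabits 0%N) (gE_rel E v).
End Characteristic.

From Pilot Require Import Defs.
From HB Require Import structures.
From mathcomp Require Import all_boot all_order all_algebra.
From mathcomp Require Import ring zify.
From Stdlib Require Import ClassicalEpsilon.

Set Implicit Arguments. Unset Strict Implicit. Unset Printing Implicit Defensive.
Import Order.TTheory GRing.Theory Num.Theory.

(* If some complex B_k of dimension at least 2 had p | g at each of its free
   vertices, p would divide their gcd, which is 1.  If B_k has dimension at most
   1, admissibility provides a free vertex v whose face E is v itself or an
   edge, and then g_E(v) = 1: the quotient lattice Z^n / span(E) has rank at
   most 1, and a primitive 1x1 integer matrix has determinant +-1.  Choosing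
   such a free vertex at every step yields the sequence.  To evaluate g_E(v) we
   must exhibit the data defining it: the rows lambda(F) of the n facets at v
   form a basis of R^n (R-characteristic), and for an edge E the projection
   rho_E is the primitive part of the cofactor column of the facet omitted
   from E. *)

Lemma big_gcdn_coprime (I : finType) (P : pred I) (F : I -> nat) (p : nat) :
  prime p -> \big[gcdn/0]_(i | P i) F i = 1 -> exists2 i, P i & coprime p (F i).
Proof.
move=> p_pr gcd1; apply/exists_inP; apply: contraLR isT => /exists_inPn noncop.
have : p %| \big[gcdn/0]_(i | P i) F i.
  by apply/dvdn_biggcdP => i Pi; move: (noncop i Pi); rewrite prime_coprime // negbK.
by rewrite gcd1 dvdn1 => /eqP p1; rewrite p1 in p_pr.
Qed.

Lemma card_enum_inj (T : finType) (A : {set T}) (n : nat) :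
  #|A| = n -> exists e : 'I_n -> T, injective e /\ codom e =i A.
Proof.
move=> A_card; exists (fun k => enum_val (cast_ord (esym A_card) k)); split.
  by move=> k1 k2 /enum_val_inj /cast_ord_inj.
move=> i; apply/codomP/idP => [[k ->]|iA]; first exact: enum_valP.
by exists (cast_ord A_card (enum_rank_in iA i)); rewrite cast_ordK enum_rankK_in.
Qed.

Section GreedyRetraction.
Variables (n m : nat) (K : {set {set 'I_m}}).

Lemma Eof_free (B : {set {set 'I_m}}) (v : {set 'I_m}) :
  is_free n K B v -> free_with n K B v (Eof n K B v).
Proof. by rewrite /Eof; case: pickP => [//|none] /existsP [E]; rewrite none. Qed.

Definition verts (B : {set {set 'I_m}}) : {set {set 'I_m}} := [set w in B | isvert n K w].

Lemma isvert_subset_eq (w v : {set 'I_m}) :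
  isvert n K w -> isvert n K v -> w \subset v -> w = v.
Proof.
case/andP => _ /eqP w_card; case/andP => _ /eqP v_card wv.
by apply/eqP; rewrite eqEcard wv w_card v_card leqnn.
Qed.

Lemma verts_next (B : {set {set 'I_m}}) (v : {set 'I_m}) :
  isvert n K v -> verts (Defs.next B v) = verts B :\ v.
Proof.
move=> vvert; apply/setP => w; rewrite !inE.
have [wvert|] := boolP (isvert n K w); last by rewrite !andbF.
rewrite !andbT; have [wv|wv] /= := boolP (w \subset v).
  by rewrite andbF (isvert_subset_eq wvert vvert wv) eqxx.
by case: eqP wv => [->|_]; rewrite ?subxx ?andbT.
Qed.

Lemma retr_tail_greedy (P : {set {set 'I_m}} -> {set 'I_m} -> {set 'I_m} -> Prop) :
  (forall B, reachable n K B -> exists2 v, is_free n K B v & P B (Eof n K B v) v) ->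
  forall B, reachable n K B ->
  exists s, [/\ retr_tail n K B s, size s = #|verts B|
             & forall B' E v, (B', E, v) \in s -> P B' E v].
Proof.
move=> free_choice B; have [N] := ubnP #|B|; elim: N B => // N IH B B_lt B_reach.
have [v v_free Pv] := free_choice B B_reach.
have E_free := Eof_free v_free; set E := Eof n K B v in Pv E_free.
have /and5P [vvert vB EB _ _] := E_free.
have [B1|B_neq1] := eqVneq B [set v].
  exists [:: (B, E, v)]; split.
  - by do 3!split=> //; move: EB; rewrite B1 => /set1P.
  - suff -> : verts B = [set v] by rewrite cards1.
    by apply/setP => w; rewrite B1 !inE; case: eqP => // ->.
  - by move=> B' E' v'; rewrite mem_seq1 => /eqP [-> -> ->].
have next_lt : (#|Defs.next B v| < #|B|)%N.
  apply: proper_card; apply/properP; split.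
    by apply/subsetP => S; rewrite inE => /andP [].
  by exists v => //; rewrite inE subxx andbF.
have [s [s_retr s_size s_P]] :=
  IH _ (leq_trans next_lt B_lt) (reachS B_reach v_free B_neq1).
exists ((B, E, v) :: s); split.
- by case: s s_retr {s_size s_P} => [//|t s] s_retr; do 2!split.
- by rewrite /= s_size verts_next // (cardsD1 v (verts B)) inE vB vvert.
- by move=> B' E' v'; rewrite in_cons => /orP [/eqP [-> -> ->] //|]; apply: s_P.
Qed.

End GreedyRetraction.

Section IntegerMatrices.
Local Open Scope ring_scope.

Lemma sum_fibers_scale (n m : nat) (Rg : pzRingType) (V : lmodType Rg)
  (e : 'I_n -> 'I_m) (y : 'I_n -> Rg) (F : 'I_m -> V) :
  \sum_i (\sum_(k | e k == i) y k) *: F i = \sum_k y k *: F (e k).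
Proof.
under eq_bigr do rewrite scaler_suml.
rewrite (exchange_big_dep xpredT) //=.
by apply: eq_bigr => k _; rewrite (big_pred1 (e k)) // => i /=; rewrite eq_sym.
Qed.

Lemma mulmx_adj_col (Rg : comPzRingType) (n : nat) (N : 'M[Rg]_n) (r : 'I_n) :
  N *m col r (\adj N) = \det N *: col r 1%:M.
Proof.
apply/colP => k; have := congr1 (fun M : 'M_n => M k r) (mul_mx_adj N).
rewrite !mxE mulr_natr => <-; by apply: eq_bigr => j _; rewrite !mxE.
Qed.

Lemma cramer_coord (R : comPzRingType) (n : nat) (N : 'M[int]_n) (r : 'I_n)
    (x : 'rV[int]_n) (y : 'rV[R]_n) :
  map_mx intr x = y *m map_mx intr N ->
  ((x *m col r (\adj N)) 0 0)%:~R = (\det N)%:~R * y 0 r.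
Proof.
pose Cr := map_mx (intr : int -> R) (col r (\adj N)).
move=> xE; transitivity ((map_mx intr x *m Cr) 0 0); first by rewrite -map_mxM [RHS]mxE.
rewrite xE -mulmxA -map_mxM mulmx_adj_col mxE (bigD1 r) //= big1 ?addr0.
  by rewrite !mxE eqxx mulr1 mulrC.
move=> k k_neq_r; rewrite !mxE.
by rewrite (negbTE k_neq_r) mulr0 rmorph0 mulr0.
Qed.

Lemma col_primitive_factor (n : nat) (Q : 'cV[int]_n) : (0 < n)%N ->
  exists (P : 'cV[int]_n) (c : int) (u : 'rV[int]_n), Q = c *: P /\ u *m P = 1.
Proof.
move=> n_gt0; pose i0 : 'I_n := Ordinal n_gt0.
have [L uL [Rr _ [d _ QE]]] := int_Smith_normal_form Q.
exists (col i0 L), (d`_0 * Rr 0 0), (row i0 (invmx L)); split.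
  apply/matrixP => j a; rewrite (ord1 a) QE !mxE big_ord1 !mxE (bigD1 i0) //= !mxE /=.
  rewrite big1 ?addr0; first by rewrite mulr1n; ring.
  move=> i /negbTE i_neq0; rewrite !mxE.
  have -> : (val i == 0%N) = false.
    by apply/negbTE; apply: contraFneq i_neq0 => i0E; apply/eqP/val_inj.
  by rewrite mulr0n mulr0.
apply/matrixP => a b; rewrite (ord1 a) (ord1 b).
have := congr1 (fun M : 'M[int]_n => M i0 i0) (mulVmx uL).
by rewrite !mxE => <-; apply: eq_bigr => k _; rewrite !mxE.
Qed.

Lemma abs_det_primitive (k : nat) (W : 'M[int]_k) : (k <= 1)%N ->
  (forall s, primitive (row s W)) -> `|\det W|%N = 1%N.
Proof.
case: k W => [|[|//]] W _ Wprim; first by rewrite det_mx00.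
by rewrite det_mx11; apply: (Wprim 0) => j; rewrite (ord1 j) mxE dvdzz.
Qed.

End IntegerMatrices.

Section RowLattice.
Variables (R : realFieldType) (n m : nat) (lam : 'I_m -> 'rV[int]_n).
Local Open Scope ring_scope.

Definition lam_rows (e : 'I_n -> 'I_m) : 'M[int]_n := \matrix_k lam (e k).

Lemma lam_rows_span (e : 'I_n -> 'I_m) (x : 'rV[int]_n) : \det (lam_rows e) != 0 ->
  exists y : 'rV[R]_n, map_mx intr x = y *m map_mx intr (lam_rows e).
Proof.
move=> detN; pose NR := map_mx (intr : int -> R) (lam_rows e).
have NR_unit : NR \in unitmx by rewrite unitmxE unitfE det_map_mx intr_eq0.
by exists (map_mx intr x *m invmx NR); rewrite mulmxKV.
Qed.

Lemma in_Rspan_rows (e : 'I_n -> 'I_m) (S : {set 'I_m}) (x : 'rV[int]_n) :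
  injective e -> {subset S <= codom e} ->
  in_Rspan R lam S x <->
  exists2 y : 'rV[R]_n, map_mx intr x = y *m map_mx intr (lam_rows e)
                      & forall k, e k \notin S -> y 0 k = 0.
Proof.
have rowsE (y : 'rV[R]_n) :
    y *m map_mx intr (lam_rows e) = \sum_k y 0 k *: map_mx intr (lam (e k)).
  by rewrite mulmx_sum_row; apply: eq_bigr => k _; rewrite -map_row rowK.
move=> e_inj S_e; split.
  case=> c [cS xE]; exists (\row_k c (e k)) => [|k /cS]; last by rewrite mxE.
  rewrite rowsE xE; under [RHS]eq_bigr do rewrite mxE.
  rewrite -(sum_fibers_scale e (fun k => c (e k)) (fun i => map_mx intr (lam i))).
  apply: eq_bigr => i _.
  congr (_ *: _); have [/codomP [k ->]|i_notin_e] := boolP (i \in codom e).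
    by rewrite (big_pred1 k) // => k'; rewrite /= inj_eq.
  rewrite big_pred0 ?cS //; first exact: contra (@S_e i) i_notin_e.
  by move=> k; apply: contraNF i_notin_e => /eqP <-; apply: codom_f.
case=> y xE yS; exists (fun i => \sum_(k | e k == i) y 0 k); split.
  by move=> i iS; apply: big1 => k /eqP eki; apply: yS; rewrite eki.
by rewrite xE rowsE sum_fibers_scale.
Qed.

Lemma lam_rows_det_neq0 (K : {set {set 'I_m}}) (v : {set 'I_m}) (e : 'I_n -> 'I_m) :
  R_characteristic lam K -> v \in K -> injective e -> (forall k, e k \in v) ->
  \det (lam_rows e) != 0.
Proof.
move=> Rch vK e_inj e_v; apply/negP => /det0P [z /negP z_neq0 zN]; apply: z_neq0.
pose c i := \sum_(k | e k == i) z 0 k.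
have c0 : forall i, c i = 0.
  apply: (Rch v vK c) => [i i_notin_v|].
    by apply: big_pred0 => k; apply: contraNF i_notin_v => /eqP <-.
  rewrite /c sum_fibers_scale; transitivity (z *m lam_rows e) => //.
  by rewrite mulmx_sum_row; apply: eq_bigr => k _; rewrite rowK.
apply/eqP/rowP => k; rewrite mxE -(c0 (e k)) /c (big_pred1 k) // => k'.
by rewrite /= inj_eq.
Qed.

Lemma in_Rspan_drop_facet (e : 'I_n -> 'I_m) (v : {set 'I_m}) (r : 'I_n)
    (x : 'rV[int]_n) :
  injective e -> codom e =i v -> \det (lam_rows e) != 0 ->
  in_Rspan R lam (v :\ e r) x <-> (x *m col r (\adj (lam_rows e))) 0 0 = 0.
Proof.
move=> e_inj e_v detN.
have outside k : (e k \notin v :\ e r) = (k == r).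
  by rewrite !inE -e_v codom_f andbT negbK (inj_eq e_inj).
have E_e : {subset v :\ e r <= codom e} by move=> i; rewrite !inE e_v => /andP [].
rewrite (in_Rspan_rows x e_inj E_e); split=> [[y xE yE]|xC0].
  by apply: (@intr_inj R); rewrite (cramer_coord r xE) yE ?outside // mulr0.
have [y xE] := lam_rows_span x detN; exists y => // k; rewrite outside => /eqP ->.
apply/eqP; move/esym: (cramer_coord r xE); rewrite xC0 rmorph0.
by move/eqP; rewrite mulf_eq0 intr_eq0 (negbTE detN).
Qed.

End RowLattice.

Section LatticeQuotient.
Variables (R : realFieldType) (n m : nat) (lam : 'I_m -> 'rV[int]_n).
Local Open Scope ring_scope.

(* The body of [gE_rel], with the rank [k] of the quotient lattice abstracted
   from the term [n - #|E|] so that witnesses can be given at [k = 0] or 1. *)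
Definition rho_data (E v : {set 'I_m}) (k : nat) (P : 'M[int]_(n, k))
    (f : 'I_k -> 'I_m) (W : 'M[int]_k) : Prop :=
  [/\ forall y : 'rV[int]_k, exists x : 'rV[int]_n, x *m P = y,
      forall x : 'rV[int]_n, x *m P = 0 <-> in_Rspan R lam E x,
      injective f /\ (forall s, f s \in v :\: E) /\
        (forall i, i \in v :\: E -> exists s, f s = i)
    & forall s, primitive (row s W) /\
        exists c : nat, (0 < c)%N /\ lam (f s) *m P = c%:Z *: row s W].

Lemma gE_rel_of_rho_data (E v : {set 'I_m}) k (P : 'M[int]_(n, k)) f W :
  k = (n - #|E|)%N -> @rho_data E v k P f W -> gE_rel R lam E v `|\det W|%N.
Proof. by move=> kE; subst k; case=> *; exists P, f, W. Qed.

Lemma gE_rel_low_dim (E v : {set 'I_m}) g :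
  (n - #|E| <= 1)%N -> gE_rel R lam E v g -> g = 1%N.
Proof.
move=> low [P [f [W [_ _ _ Wprim ->]]]].
by apply: abs_det_primitive => // s; case: (Wprim s).
Qed.

Lemma gE_low_dim (E v : {set 'I_m}) k (P : 'M[int]_(n, k)) f W :
  k = (n - #|E|)%N -> (k <= 1)%N -> @rho_data E v k P f W -> gE R lam E v = 1%N.
Proof.
move=> kE low data; apply: (@gE_rel_low_dim E v); first by rewrite -kE.
by apply: epsilon_spec; exists `|\det W|%N; apply: gE_rel_of_rho_data data.
Qed.

Lemma vertex_rho_data (e : 'I_n -> 'I_m) (v : {set 'I_m}) :
  injective e -> codom e =i v -> \det (lam_rows lam e) != 0 ->
  rho_data v v (0 : 'M[int]_(n, 0)) (ffun0 (card_ord 0)) (0 : 'M[int]_0).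
Proof.
move=> e_inj e_v detN; split.
- by move=> y; exists 0; rewrite [y]thinmx0 [LHS]thinmx0.
- move=> x; split=> [_|_]; last by rewrite mulmx0.
  have [y xE] := lam_rows_span R x detN.
  apply/(in_Rspan_rows _ _ _ e_inj) => [i|]; first by rewrite e_v.
  by exists y => // k; rewrite -e_v codom_f.
- by split; [case | split; [case | move=> i; rewrite setDv inE]].
- by case.
Qed.

Lemma edge_rho_data (e : 'I_n -> 'I_m) (v : {set 'I_m}) (r : 'I_n) :
  injective e -> codom e =i v -> \det (lam_rows lam e) != 0 ->
  exists (P : 'cV[int]_n) (W : 'M[int]_1), rho_data (v :\ e r) v P (fun=> e r) W.
Proof.
move=> e_inj e_v detN; set N := lam_rows lam e; set C := col r (\adj N).
have [P [c [u [CE uP]]]] :=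
  col_primitive_factor C (leq_ltn_trans (leq0n r) (ltn_ord r)).
have xC (x : 'rV[int]_n) : (x *m C) 0 0 = c * (x *m P) 0 0 by rewrite CE -scalemxAr mxE.
pose a := (lam (e r) *m P) 0 0.
have detNE : \det N = c * a.
  rewrite -xC -[lam (e r)](rowK (fun k => lam (e k)) r) -row_mul mulmx_adj_col.
  by rewrite !mxE eqxx mulr1.
have c_neq0 : c != 0 by apply: contraNneq detN => c0; rewrite detNE c0 mul0r.
have a_neq0 : a != 0 by apply: contraNneq detN => a0; rewrite detNE a0 mulr0.
exists P, (sgz a)%:M; split.
- move=> y; exists (y 0 0 *: u); rewrite -scalemxAl uP [RHS]mx11_scalar.
  by apply/matrixP => i j; rewrite !mxE mulr_natr.
- move=> x; rewrite (in_Rspan_drop_facet R r x e_inj e_v detN) xC.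
  split=> [->|/eqP]; first by rewrite mxE mulr0.
  rewrite mulf_eq0 (negbTE c_neq0) => /eqP xP0.
  by rewrite [LHS]mx11_scalar xP0; apply/matrixP => i j; rewrite !mxE mul0rn.
- split; first by move=> s1 s2 _; rewrite (ord1 s1) (ord1 s2).
  split; first by move=> s; rewrite !inE eqxx -e_v codom_f.
  move=> i; rewrite !inE => /andP [+ iv]; rewrite iv andbT negbK => /eqP ->.
  by exists 0.
- move=> s; rewrite (ord1 s); split.
    move=> d /(_ 0); rewrite !mxE eqxx mulr1n => d_dvd.
    have sgz_a : `|sgz a|%N = 1%N by move: a_neq0; case: (sgzP a).
    by apply/eqP; rewrite -dvdn1 -sgz_a.
  exists `|a|%N; split; first by rewrite absz_gt0.
  apply/matrixP => i j; rewrite (ord1 i) (ord1 j) -/a !mxE eqxx mulr1n.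
  by rewrite {1}(intEsg a) mulrC.
Qed.

Lemma gE_face_low_dim (K : {set {set 'I_m}}) (E v : {set 'I_m}) :
  R_characteristic lam K -> isvert n K v -> E \subset v -> (n - #|E| <= 1)%N ->
  gE R lam E v = 1%N.
Proof.
move=> Rch /andP [vK /eqP v_card] Ev low.
have [e [e_inj e_v]] := card_enum_inj v_card.
have detN : \det (lam_rows lam e) != 0.
  by apply: (lam_rows_det_neq0 Rch vK e_inj) => k; rewrite -e_v codom_f.
have E_le : (#|E| <= n)%N by rewrite -v_card subset_leq_card.
have [E_card|E_card] := eqVneq #|E| n.
  have E_v : E = v by apply/eqP; rewrite eqEcard Ev E_card v_card leqnn.
  apply: (@gE_low_dim E v 0) => //; first by rewrite E_card subnn.
  by rewrite E_v; apply: vertex_rho_data e_inj e_v detN.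
have E_codim : (n - #|E|)%N = 1%N by move: E_card => /eqP; lia.
have /cards1P [w vE] : #|v :\: E| == 1%N.
  by rewrite cardsD (setIidPr Ev) v_card E_codim.
have : w \in codom e by rewrite e_v; apply: (subsetP (subsetDl v E)); rewrite vE set11.
case/codomP => r wE; have E_def : E = v :\ e r.
  by rewrite -wE -vE setDDr setDv set0U (setIidPr Ev).
have [P [W data]] := edge_rho_data r e_inj e_v detN.
by rewrite E_def in E_codim *; apply: gE_low_dim data.
Qed.

End LatticeQuotient.

Theorem mainTheorem7 (R : realFieldType) (n m : nat)
    (A : 'M[R]_(m, n)) (b : 'cV[R]_m)
    (K : {set {set 'I_m}}) (lam : 'I_m -> 'rV[int]_n) :
  simple_polytope A b ->
  (forall S : {set 'I_m}, S \in K <-> meets A b S) ->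
  R_characteristic lam K ->
  admissible n K ->
  (forall B, reachable n K B -> (1 < dimB n B)%N ->
     \big[gcdn/0%N]_(v in B | is_free n K B v) gE R lam (Eof n K B v) v = 1%N) ->
  forall p : nat, prime p ->
    exists s : seq ({set {set 'I_m}} * {set 'I_m} * {set 'I_m}),
      [/\ retraction_seq n K s,
          size s = nverts n K
        & forall B E v, (B, E, v) \in s -> coprime p (gE R lam E v)].
Proof.
move=> _ _ Rch adm gcd1 p p_prime.
have good_vertex B : reachable n K B ->
    exists2 v, is_free n K B v & coprime p (gE R lam (Eof n K B v) v).
  move=> B_reach; have [dimB_gt1|dimB_le1] := ltnP 1 (dimB n B).
    have [v /andP [_ v_free] cop] := big_gcdn_coprime p_prime (gcd1 B B_reach dimB_gt1).
    by exists v.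
  have [v v_free] := adm B B_reach; exists v => //.
  have /and5P [vvert _ EB Ev _] := Eof_free v_free.
  rewrite (gE_face_low_dim R Rch vvert Ev) ?coprimen1 //.
  apply: leq_trans dimB_le1.
  exact: (@leq_bigmax_cond _ (mem B) (fun S : {set 'I_m} => n - #|S|) _ EB).
have [s [s_retr s_size s_cop]] :=
  retr_tail_greedy (P := fun _ E v => coprime p (gE R lam E v)) good_vertex (reach0 n K).
exists s; split=> //; rewrite s_size; apply: eq_card => w.
by rewrite !inE /isvert andbA andbb.
Qed.
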